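(* Fix an integer $k\ge2$. For each $3$-element subset $A=\{a,b,c\}$ of $\{0,1,\dots,k\}$ with $a<b<c$, let $\rho_A$ be the polymatroid on a $2$-element set $\{e,f\}$ given by $\rho_A(\emptyset)=0$, $\rho_A(\{e\})=b$, $\rho_A(\{f\})=c$, $\rho_A(\{e,f\})=a+c$. Then a $k$-polymatroid is an excluded minor for $\mathcal{Q}_k$ within the class of $k$-polymatroids (i.e., it is not in $\mathcal{Q}_k$ but all of its proper minors are) if and only if it is isomorphic to $\rho_A$ for some such $A$; thus $\mathcal{Q}_k$ has exactly $\binom{k+1}{3}$ excluded minors within the class of $k$-polymatroids.
   Context: A polymatroid on a finite set $E$ is a function $\rho:2^E\to\mathbb{Z}$ that is normalized, non-decreasing and submodular; it is a $k$-polymatroid if $\rho(\{e\})\le k$ for all $e$. For matroids $Q,L$ on $E$, $Q$ is a quotient of $L$ if there is a matroid $M$ and $A\subseteq E(M)$ with $L=M\backslash A$ and $Q=M/A$ (equivalently, $r_L-r_Q$ is non-decreasing). $\mathcal{Q}_k$ is the class of polymatroids of the form $r_{M_1}+\cdots+r_{M_k}$ where each $M_{i+1}$ ($i\in[k-1]$) is a quotient of (possibly equal to) $M_i$. Minors: $\rho_{\backslash A}(X)=\rho(X)$, $\rho_{/A}(X)=\rho(X\cup A)-\rho(A)$ for $X\subseteq E-A$; minors are $(\rho_{\backslash A})_{/B}$ for disjoint $A,B$, proper if $A\cup B\ne\emptyset$. Polymatroids are isomorphic if a bijection of ground sets preserves the rank function. *)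

From mathcomp Require Import all_boot all_order all_algebra.
Set Implicit Arguments. Unset Strict Implicit. Unset Printing Implicit Defensive.
Import Order.TTheory GRing.Theory Num.Theory.
Local Open Scope ring_scope.

Definition is_polymatroid (E : finType) (rho : {set E} -> int) : Prop :=
  [/\ rho set0 = 0,
      (forall X Y : {set E}, X \subset Y -> rho X <= rho Y) &
      (forall X Y : {set E}, rho (X :|: Y) + rho (X :&: Y) <= rho X + rho Y)].

Definition is_kpolymatroid (k : nat) (E : finType) (rho : {set E} -> int) : Prop :=
  is_polymatroid rho /\ forall e : E, rho [set e] <= k%:Z.

Definition is_matroid_rank (E : finType) (r : {set E} -> nat) : Prop :=
  [/\ (forall X : {set E}, r X <= #|X|)%N,
      (forall X Y : {set E}, X \subset Y -> r X <= r Y)%N &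
      (forall X Y : {set E}, r (X :|: Y) + r (X :&: Y) <= r X + r Y)%N].

(* Q is a quotient of L (both matroids on E): there is a matroid M on
   E (+) F (F the set A) with L = M \ A and Q = M / A.
   Deletion: r_L(X) = r_M(X); contraction: r_Q(X) = r_M(X u A) - r_M(A)
   (written additively to avoid truncated subtraction). *)
Definition is_quotient (E : finType) (rQ rL : {set E} -> nat) : Prop :=
  exists (F : finType) (rM : {set (E + F)%type} -> nat),
    is_matroid_rank rM /\
    forall X : {set E},
      rL X = rM (inl @: X) /\
      (rQ X + rM (inr @: [set: F]) = rM ((inl @: X) :|: (inr @: [set: F])))%N.

(* The class Q_k: rho = r_{M_1} + ... + r_{M_k} (indices 0..k-1 here), with
   each M_{i+1} a quotient of M_i. *)
Definition in_Qk (k : nat) (E : finType) (rho : {set E} -> int) : Prop :=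
  exists r : nat -> {set E} -> nat,
    [/\ (forall i, (i < k)%N -> is_matroid_rank (r i)),
        (forall i, (i.+1 < k)%N -> is_quotient (r i.+1) (r i)) &
        (forall X : {set E}, rho X = (\sum_(i < k) r i X)%N%:Z)].

(* Minor (rho \ A) / B on the ground set E - (A u B). *)
Definition minor (E : finType) (A B : {set E}) (rho : {set E} -> int)
  : {set {x : E | x \in ~: (A :|: B)}} -> int :=
  fun X => rho ([set val x | x in X] :|: B) - rho B.

Definition excluded_minor_Qk (k : nat) (E : finType) (rho : {set E} -> int) : Prop :=
  [/\ is_kpolymatroid k rho,
      ~ in_Qk k rho &
      (forall A B : {set E}, [disjoint A & B] -> A :|: B != set0 ->
         in_Qk k (@minor E A B rho))].

Definition poly_iso (E F : finType) (rho : {set E} -> int) (sig : {set F} -> int) : Prop :=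
  exists f : E -> F, bijective f /\ forall X : {set E}, sig (f @: X) = rho X.

(* rho_A on the 2-element set {e, f} = {false, true} (e = false, f = true). *)
Definition rhoA (a b c : nat) (X : {set bool}) : int :=
  if X == set0 then 0
  else if X == [set false] then b%:Z
  else if X == [set true] then c%:Z
  else (a + c)%N%:Z.

From mathcomp Require Import all_boot all_order all_algebra.
From mathcomp Require Import zify.
From Stdlib Require Import Classical.
Set Implicit Arguments. Unset Strict Implicit. Unset Printing Implicit Defensive.
Import Order.TTheory GRing.Theory Num.Theory.

(* Write D_e rho(X) = rho(X) - rho(X - e).  If rho = r_0 + ... + r_(k-1) with
   each r_(i+1) a quotient of r_i, the 0/1 marginals D_e r_i(X) are
   non-increasing in i, so D_e r_j(X) = [j < D_e rho(X)]: the layers r_j are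
   determined by rho, and computing r_j(X) - r_j(X - e - m) in both orders gives
   an exchange identity between these indicators.  Conversely, if a
   k-polymatroid satisfies the identity, integrating the indicators yields
   matroids r_j forming a chain of quotients with sum rho.  The identity at
   (X, e, m) is the identity at {e, m} of the minor (rho \ (E - X)) / (X - e - m),
   so an excluded minor lives on two elements e, m, where the identity fails
   exactly when rho(e) <> rho(m) and rho(em) < rho(e) + rho(m); this is
   rho_A for A = {rho(em) - rho(m), rho(e), rho(m)} when rho(e) < rho(m). *)

Section FinsetInduction.
Variable T : finType.

Lemma finset_strong_ind (P : {set T} -> Prop) :
  (forall Y : {set T}, (forall Z : {set T}, #|Z| < #|Y| -> P Z) -> P Y) ->
  forall Y, P Y.
Proof.
move=> IH Y; have [n leYn] := ubnP #|Y|; elim: n Y leYn => // n IHn Y ltYn.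
by apply: IH => Z ltZY; apply: IHn; apply: leq_trans ltZY _.
Qed.

Lemma finset_ind (P : {set T} -> Prop) :
  P set0 -> (forall (X : {set T}) e, e \in X -> P (X :\ e) -> P X) ->
  forall X, P X.
Proof.
move=> P0 PD1; elim/finset_strong_ind => X IH.
have [->|[e eX]] := set_0Vmem X; first exact: P0.
by apply: (PD1 X e eX); apply: IH; rewrite (cardsD1 e X) eX.
Qed.

Lemma subset_ind (P : {set T} -> {set T} -> Prop) :
  (forall X, P X X) ->
  (forall (X Y : {set T}) e,
     e \in Y -> X \subset Y :\ e -> P X (Y :\ e) -> P X Y) ->
  forall X Y : {set T}, X \subset Y -> P X Y.
Proof.
move=> Prefl PD1 X; elim/finset_strong_ind => Y IH sXY.
have [sYX|/subsetPn[e eY eNX]] := boolP (Y \subset X).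
  by have -> : X = Y by apply/eqP; rewrite eqEsubset sXY.
have sXYe : X \subset Y :\ e.
  by rewrite subsetD1 sXY; apply: contra eNX => ->.
by apply: (PD1 _ _ _ eY sXYe); apply: IH sXYe; rewrite (cardsD1 e Y) eY.
Qed.

End FinsetInduction.

Lemma setD1_id (T : finType) (A : {set T}) a : a \notin A -> A :\ a = A.
Proof. by move=> aNA; apply/setDidPl; rewrite disjoint_sym disjoints1. Qed.

Lemma setD1I1 (T : finType) (A : {set T}) a : (A :\ a) :&: [set a] = set0.
Proof. by rewrite setDE -setIA (setIC _ [set a]) setICr setI0. Qed.

Lemma imsetD1 (aT rT : finType) (f : aT -> rT) (A : {set aT}) a :
  injective f -> f @: (A :\ a) = f @: A :\ f a.
Proof.
move=> f_inj; apply/setP => y; rewrite !inE.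
apply/imsetP/andP => [[x /setD1P[xa xA] ->]|[ya /imsetP[x xA yx]]].
  by rewrite (inj_eq f_inj) xa imset_f.
by exists x; rewrite // !inE xA andbT; apply: contraNneq ya => <-; rewrite yx.
Qed.

Lemma sum_ord_lt (k d : nat) : \sum_(i < k) (i < d : nat) = minn d k.
Proof.
elim: k => [|k IH]; first by rewrite big_ord0 minn0.
by rewrite big_ord_recr /= IH; case: (ltnP k d) => /= ?; lia.
Qed.

Section SumSets.
Variables E F : finType.
Implicit Types (X : {set E}) (G : {set F}) (S : {set E + F}).

Lemma inl_in_imset_inl X x : (@inl E F x \in inl @: X) = (x \in X).
Proof. exact/mem_imset/inl_inj. Qed.

Lemma inr_in_imset_inr G y : (@inr E F y \in inr @: G) = (y \in G).
Proof. exact/mem_imset/inr_inj. Qed.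

Lemma inl_in_imset_inr G x : (@inl E F x \in inr @: G) = false.
Proof. by apply/imsetP => -[]. Qed.

Lemma inr_in_imset_inl X y : (@inr E F y \in inl @: X) = false.
Proof. by apply/imsetP => -[]. Qed.

Definition in_sum_imsetE :=
  (inl_in_imset_inl, inr_in_imset_inr, inl_in_imset_inr, inr_in_imset_inl).

Lemma card_sum_set S : #|S| = #|inl @^-1: S| + #|inr @^-1: S|.
Proof.
have SE : S = inl @: (inl @^-1: S) :|: inr @: (inr @^-1: S).
  by apply/setP => -[x|y]; rewrite !inE !in_sum_imsetE ?inE ?orbF.
rewrite {1}SE cardsU (card_imset _ inl_inj) (card_imset _ inr_inj).
suff -> : inl @: (inl @^-1: S) :&: inr @: (inr @^-1: S) = set0 by rewrite cards0 subn0.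
by apply/setP => -[x|y]; rewrite !inE !in_sum_imsetE ?andbF.
Qed.

End SumSets.

Lemma matroid_rank0 (E : finType) (r : {set E} -> nat) :
  is_matroid_rank r -> r set0 = 0.
Proof. by case=> r_card _ _; apply/eqP; rewrite -leqn0 -(cards0 E) r_card. Qed.

Lemma matroid_rank_setD1 (E : finType) (r : {set E} -> nat) (X : {set E}) e :
  is_matroid_rank r -> e \in X -> r (X :\ e) <= r X <= (r (X :\ e)).+1.
Proof.
move=> rM eX; case: (rM) => r_card r_mono r_sub.
rewrite r_mono ?subD1set //=.
have := r_sub (X :\ e) [set e]; rewrite setUC setD1K //.
by rewrite setD1I1; have := r_card [set e]; rewrite cards1 matroid_rank0 //; lia.
Qed.

Lemma quotient_rank_diff_mono (E : finType) (rQ rL : {set E} -> nat) (X Y : {set E}) :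
  is_quotient rQ rL -> X \subset Y -> rL X + rQ Y <= rL Y + rQ X.
Proof.
case=> F [rM [[_ _ rM_sub] rME]] sXY.
have [-> rQX] := rME X; have [-> rQY] := rME Y.
have := rM_sub (inl @: Y) (inl @: X :|: inr @: [set: F]).
have -> : inl @: Y :|: (inl @: X :|: inr @: [set: F]) = inl @: Y :|: inr @: [set: F].
  apply/setP => -[x|y]; rewrite !inE !in_sum_imsetE ?orbF //.
  exact/orb_idr/(subsetP sXY).
have -> : inl @: Y :&: (inl @: X :|: inr @: [set: F]) = inl @: X.
  apply/setP => -[x|y]; rewrite !inE !in_sum_imsetE ?andbF ?orbF //.
  exact/andb_idl/(subsetP sXY).
lia.
Qed.

Lemma preimset_inl_sum (E F : finType) (X : {set E}) (G : {set F}) :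
  inl @^-1: (inl @: X :|: inr @: G) = X.
Proof. by apply/setP => x; rewrite !inE !in_sum_imsetE orbF. Qed.

Lemma preimset_inr_sum (E F : finType) (X : {set E}) (G : {set F}) :
  inr @^-1: (inl @: X :|: inr @: G) = G.
Proof. by apply/setP => y; rewrite !inE !in_sum_imsetE. Qed.

(* Adding d elements to L freely, up to rank r_Q + d; for d = r_L(E) - r_Q(E)
   deleting them gives back L and contracting them gives Q. *)
Definition lift_rank (E : finType) (rL rQ : {set E} -> nat) (d : nat)
    (S : {set E + 'I_d}) : nat :=
  minn (rL (inl @^-1: S) + #|inr @^-1: S|) (rQ (inl @^-1: S) + d).
Arguments lift_rank {E} rL rQ d S.

Lemma lift_rank_matroid (E : finType) (rQ rL : {set E} -> nat) d :
  is_matroid_rank rQ -> is_matroid_rank rL ->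
  (forall X Y : {set E}, X \subset Y -> rL X + rQ Y <= rL Y + rQ X) ->
  is_matroid_rank (lift_rank rL rQ d).
Proof.
move=> [_ Q_mono Q_sub] [L_card L_mono L_sub] diff; split.
- move=> S; apply: leq_trans (geq_minl _ _) _.
  by rewrite [#|S|]card_sum_set leq_add2r L_card.
- move=> S T sST; rewrite /lift_rank leq_min !geq_min leq_add2r Q_mono ?preimsetS ?orbT //=.
  by rewrite leq_add ?L_mono ?subset_leq_card ?preimsetS.
- move=> S T; rewrite /lift_rank !preimsetU !preimsetI.
  set XS := inl @^-1: S; set XT := inl @^-1: T.
  set GS := inr @^-1: S; set GT := inr @^-1: T.
  set gU := #|GS :|: GT|; set gI := #|GS :&: GT|; set gS := #|GS|; set gT := #|GT|.
  have := L_sub XS XT; have := Q_sub XS XT; have := cardsUI GS GT.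
  have := subset_leq_card (subsetIl GS GT); have := subset_leq_card (subsetIr GS GT).
  have := diff _ _ (subsetIl XS XT); have := diff _ _ (subsetIr XS XT).
  lia.
Qed.

Lemma quotient_of_rank_diff_mono (E : finType) (rQ rL : {set E} -> nat) :
  is_matroid_rank rQ -> is_matroid_rank rL ->
  (forall X Y : {set E}, X \subset Y -> rL X + rQ Y <= rL Y + rQ X) ->
  is_quotient rQ rL.
Proof.
move=> rQM rLM diff; have Q0 := matroid_rank0 rQM; have L0 := matroid_rank0 rLM.
have QL X : rQ X <= rL X by have := diff _ X (sub0set X); rewrite Q0 L0; lia.
pose d := rL setT - rQ setT.
have Ld X : rL X <= rQ X + d.
  by have := diff X _ (subsetT X); have := QL setT; rewrite /d; lia.
exists 'I_d, (lift_rank rL rQ d); split; first exact: lift_rank_matroid.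
move=> X; split.
  rewrite -[inl @: X]setU0 -(imset0 inr) /lift_rank preimset_inl_sum preimset_inr_sum.
  by rewrite cards0 addn0; have := Ld X; lia.
have E0 : inr @: [set: 'I_d] = inl @: (set0 : {set E}) :|: inr @: [set: 'I_d].
  by rewrite imset0 set0U.
rewrite {1}E0 /lift_rank !preimset_inl_sum !preimset_inr_sum cardsT card_ord Q0 L0.
by have := QL X; lia.
Qed.

Definition marginal_gt (E : finType) (rho : {set E} -> int) (j : nat)
    (X : {set E}) (e : E) : bool :=
  (j%:Z < rho X - rho (X :\ e))%R.

Definition layer_consistent_at (E : finType) (rho : {set E} -> int) (j : nat)
    (X : {set E}) (e m : E) : Prop :=
  marginal_gt rho j (X :\ m) e + marginal_gt rho j X m =
  marginal_gt rho j (X :\ e) m + marginal_gt rho j X e.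

Definition layer_consistent (k : nat) (E : finType) (rho : {set E} -> int) : Prop :=
  forall (X : {set E}) (e m : E) (j : nat), e \in X -> m \in X -> e != m -> j < k ->
    layer_consistent_at rho j X e m.

Lemma antitone_bits_eq_lt_sum (k : nat) (u : nat -> nat) :
  (forall i, i < k -> u i <= 1) -> (forall i, i.+1 < k -> u i.+1 <= u i) ->
  forall j, j < k -> u j = (j < \sum_(i < k) u i).
Proof.
move=> u01 u_anti.
have u_le i j : i <= j -> j < k -> u j <= u i.
  elim: j => [|j IH]; first by rewrite leqn0 => /eqP ->.
  rewrite leq_eqVlt => /predU1P[-> //|le_ij lt_jk].
  exact: leq_trans (u_anti _ lt_jk) (IH le_ij (ltnW lt_jk)).
move=> j lt_jk; have := u01 j lt_jk; case: (posnP (u j)) => [uj0 _|uj_gt0 uj1].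
  have : \sum_(i < k) u i <= \sum_(i < k) (i < j : nat).
    apply: leq_sum => i _; case: (ltnP i j) => [lt_ij|le_ji]; first exact: u01.
    by have := u_le _ _ le_ji (ltn_ord i); rewrite uj0.
  by rewrite sum_ord_lt uj0 => /leq_trans/(_ (geq_minl _ _)); rewrite leqNgt => /negbTE ->.
have : \sum_(i < k) (i < j.+1 : nat) <= \sum_(i < k) u i.
  apply: leq_sum => i _; case: (ltnP i j.+1) => //= le_ij.
  exact: leq_trans uj_gt0 (u_le i j le_ij lt_jk).
by rewrite sum_ord_lt (minn_idPl lt_jk) => ->; lia.
Qed.

Section QkLayers.
Variables (k : nat) (E : finType) (rho : {set E} -> int) (r : nat -> {set E} -> nat).
Hypothesis r_matroid : forall i, i < k -> is_matroid_rank (r i).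
Hypothesis r_quotient : forall i, i.+1 < k -> is_quotient (r i.+1) (r i).
Hypothesis rho_sum : forall X, rho X = Posz (\sum_(i < k) r i X).

Lemma Qk_rank_marginal j (X : {set E}) e :
  j < k -> e \in X -> r j X = r j (X :\ e) + marginal_gt rho j X e.
Proof.
move=> lt_jk eX; pose u i := r i X - r i (X :\ e).
have r_D1 i : i < k -> r i (X :\ e) <= r i X <= (r i (X :\ e)).+1.
  by move=> lt_ik; apply: matroid_rank_setD1 (r_matroid lt_ik) eX.
have u01 i : i < k -> u i <= 1 by move=> /r_D1; rewrite /u; lia.
have u_anti i : i.+1 < k -> u i.+1 <= u i.
  move=> lt_ik; have := quotient_rank_diff_mono (r_quotient lt_ik) (subD1set X e).
  have := r_D1 _ lt_ik; have := r_D1 _ (ltnW lt_ik); rewrite /u; lia.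
have sum_u : (rho X - rho (X :\ e))%R = Posz (\sum_(i < k) u i).
  rewrite !rho_sum; have -> : \sum_(i < k) r i X = \sum_(i < k) r i (X :\ e) + \sum_(i < k) u i.
    rewrite -big_split /=; apply: eq_bigr => i _.
    by rewrite /u subnKC //; case/andP: (r_D1 _ (ltn_ord i)).
  lia.
rewrite /marginal_gt sum_u ltz_nat -(antitone_bits_eq_lt_sum u01 u_anti lt_jk).
by rewrite /u subnKC //; case/andP: (r_D1 _ lt_jk).
Qed.

End QkLayers.

Lemma Qk_layer_consistent (k : nat) (E : finType) (rho : {set E} -> int) :
  in_Qk k rho -> layer_consistent k rho.
Proof.
case=> r [r_matroid r_quotient rho_sum] X e m j eX mX em lt_jk.
have marginal := Qk_rank_marginal r_matroid r_quotient rho_sum lt_jk.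
have eXm : e \in X :\ m by rewrite !inE eX andbT.
have mXe : m \in X :\ e by rewrite !inE mX eq_sym em.
have := marginal _ _ mX; rewrite (marginal _ _ eXm).
have := marginal _ _ eX; rewrite (marginal _ _ mXe) !setDDl setUC.
rewrite /layer_consistent_at; lia.
Qed.

Lemma marginal_gt_antitone (E : finType) (rho : {set E} -> int) j (X Y : {set E}) e :
  is_polymatroid rho -> X \subset Y -> e \in X ->
  marginal_gt rho j Y e <= marginal_gt rho j X e.
Proof.
case=> _ _ rho_sub sXY eX; have := rho_sub (Y :\ e) X.
have -> : Y :\ e :|: X = Y.
  apply/setP => x; rewrite !inE; case: eqVneq => [->|_] /=; last exact/orb_idr/(subsetP sXY).
  by rewrite eX (subsetP sXY).
rewrite setIC setIDA (setIidPl sXY) => sub.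
rewrite /marginal_gt; case: (boolP (_ < _)%R) => //= lt_j.
by rewrite (lt_le_trans lt_j) //; lia.
Qed.

Lemma marginal_gt_succ (E : finType) (rho : {set E} -> int) j (X : {set E}) e :
  marginal_gt rho j.+1 X e <= marginal_gt rho j X e.
Proof.
rewrite /marginal_gt; case: (boolP (_ < _)%R) => //= lt_j.
by rewrite (lt_trans _ lt_j) // ltz_nat.
Qed.

Lemma kpolymatroid_marginal_nat (k : nat) (E : finType) (rho : {set E} -> int)
    (X : {set E}) e :
  is_kpolymatroid k rho -> e \in X ->
  exists2 n : nat, (rho X - rho (X :\ e))%R = Posz n & n <= k.
Proof.
case=> -[rho0 rho_mono rho_sub] rho_k eX.
have := rho_sub (X :\ e) [set e]; rewrite setUC setD1K // setD1I1 rho0.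
have := rho_mono _ _ (subD1set X e); have := rho_k e.
move=> le_k le_Xe le_sub; exists `|rho X - rho (X :\ e)|%N; first by rewrite gez0_abs; lia.
by rewrite -lez_nat gez0_abs; lia.
Qed.

Section LayerRank.
Variables (k : nat) (E : finType) (rho : {set E} -> int).
Implicit Types (X Y : {set E}) (e : E).

(* Layer consistency makes the result independent of the removal order chosen
   by [pick] (layer_rankD1). *)
Fixpoint layer_rank_rec (j n : nat) X : nat :=
  if n is n'.+1 then
    if [pick x in X] is Some x then layer_rank_rec j n' (X :\ x) + marginal_gt rho j X x
    else 0
  else 0.

Definition layer_rank j X : nat := layer_rank_rec j #|X| X.

Lemma layer_rank0 j : layer_rank j set0 = 0.
Proof. by rewrite /layer_rank cards0. Qed.

Lemma layer_rank_pick j X m :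
  [pick x in X] = Some m -> layer_rank j X = layer_rank j (X :\ m) + marginal_gt rho j X m.
Proof.
move=> pick_m; have mX : m \in X by move: pick_m; case: pickP => // x xX [<-].
by rewrite /layer_rank (cardsD1 m X) mX add1n /= pick_m.
Qed.

Hypothesis rho_consistent : layer_consistent k rho.

Lemma layer_rankD1 j X e :
  j < k -> e \in X -> layer_rank j X = layer_rank j (X :\ e) + marginal_gt rho j X e.
Proof.
move=> lt_jk; elim/finset_strong_ind: X e => X IH e eX.
have [m pick_m mX] : exists2 m, [pick x in X] = Some m & m \in X.
  by case: pickP => [m mX|/(_ e)]; [exists m | rewrite eX].
rewrite (layer_rank_pick _ pick_m); have [-> // | em] := eqVneq e m.
have ltD1 x : x \in X -> #|X :\ x| < #|X| by move=> xX; rewrite (cardsD1 x X) xX.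
rewrite (IH _ (ltD1 m mX) e) ?inE ?eX ?andbT //.
rewrite (IH _ (ltD1 e eX) m) ?inE ?mX ?andbT 1?eq_sym //.
by rewrite -!addnA (rho_consistent eX mX em lt_jk) !setDDl setUC.
Qed.

Lemma layer_rank_card j X : j < k -> layer_rank j X <= #|X|.
Proof.
move=> lt_jk; elim/finset_ind: X => [|X e eX IH]; first by rewrite layer_rank0.
by rewrite (layer_rankD1 lt_jk eX) (cardsD1 e X) eX addnC leq_add ?leq_b1.
Qed.

Lemma layer_rank_mono j : j < k -> {homo layer_rank j : X Y / X \subset Y >-> X <= Y}.
Proof.
move=> lt_jk; apply: subset_ind => // X Y e eY _ IH.
by rewrite (layer_rankD1 lt_jk eY) (leq_trans IH) ?leq_addr.
Qed.

Lemma layer_rank_quotient j X Y :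
  j.+1 < k -> X \subset Y ->
  layer_rank j X + layer_rank j.+1 Y <= layer_rank j Y + layer_rank j.+1 X.
Proof.
move=> lt_jk; move: X Y; apply: subset_ind => // X Y e eY _ IH.
rewrite (layer_rankD1 lt_jk eY) (layer_rankD1 (ltnW lt_jk) eY).
by have := marginal_gt_succ rho j Y e; lia.
Qed.

Lemma layer_rank_submod j X Y :
  is_polymatroid rho -> j < k ->
  layer_rank j (X :|: Y) + layer_rank j (X :&: Y) <= layer_rank j X + layer_rank j Y.
Proof.
move=> rho_poly lt_jk.
suff : forall I Y : {set E}, I \subset Y -> forall X, I = X :&: Y ->
    layer_rank j (X :|: Y) + layer_rank j I <= layer_rank j X + layer_rank j Y.
  by move/(_ _ _ (subsetIr X Y) X erefl).
apply: subset_ind => [I {}X IE | I {}Y e eY sIYe IH {}X IE].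
  by rewrite (setUidPl _) // IE subsetIl.
have eNX : e \notin X.
  by apply/negP => eX; have := subsetP sIYe e; rewrite IE !inE eX eY eqxx => /(_ isT).
have eXY : e \in X :|: Y by rewrite inE eY orbT.
rewrite (layer_rankD1 lt_jk eXY) (layer_rankD1 lt_jk eY) setDUl (setD1_id eNX).
have IXe : I = X :&: (Y :\ e).
  by rewrite setIDA -IE setD1_id //; apply: contraNN eNX; rewrite IE inE => /andP[].
have := IH X IXe; have := marginal_gt_antitone j rho_poly (subsetUr X Y) eY; lia.
Qed.

Lemma layer_rank_matroid j : is_polymatroid rho -> j < k -> is_matroid_rank (layer_rank j).
Proof.
move=> rho_poly lt_jk; split => [X|X Y|X Y].
- exact: layer_rank_card.
- exact: layer_rank_mono.
- exact: layer_rank_submod.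
Qed.

Lemma layer_rank_sum X : is_kpolymatroid k rho -> rho X = Posz (\sum_(i < k) layer_rank i X).
Proof.
move=> rho_kpoly; elim/finset_ind: X => [|X e eX IH].
  by rewrite big1 => [|i _]; [case: rho_kpoly => -[] | rewrite layer_rank0].
have [n nE le_nk] := kpolymatroid_marginal_nat rho_kpoly eX.
have -> : \sum_(i < k) layer_rank i X = \sum_(i < k) layer_rank i (X :\ e) + n.
  rewrite -(minn_idPl le_nk) -sum_ord_lt -big_split /=; apply: eq_bigr => i _.
  by rewrite (layer_rankD1 (ltn_ord i) eX) /marginal_gt nE ltz_nat.
by rewrite PoszD -IH -nE; lia.
Qed.

End LayerRank.

Lemma Qk_of_layer_consistent (k : nat) (E : finType) (rho : {set E} -> int) :
  is_kpolymatroid k rho -> layer_consistent k rho -> in_Qk k rho.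
Proof.
move=> rho_kpoly rho_cons; have rho_poly := rho_kpoly.1.
exists (layer_rank rho); split => [i lt_ik|i lt_ik|X].
- exact: layer_rank_matroid rho_cons _ rho_poly lt_ik.
- apply: quotient_of_rank_diff_mono.
  + exact: layer_rank_matroid rho_cons _ rho_poly lt_ik.
  + exact: layer_rank_matroid rho_cons _ rho_poly (ltnW lt_ik).
  + by move=> X Y; apply: layer_rank_quotient rho_cons _ _ _ lt_ik.
- exact: layer_rank_sum.
Qed.

Lemma poly_iso_kpolymatroid k (E F : finType) (rho : {set E} -> int) (sig : {set F} -> int) :
  poly_iso rho sig -> is_kpolymatroid k sig -> is_kpolymatroid k rho.
Proof.
case=> f [/bij_inj f_inj fE] [[sig0 sig_mono sig_sub] sig_k]; split; first split.
- by rewrite -fE imset0.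
- by move=> X Y sXY; rewrite -!fE sig_mono ?imsetS.
- by move=> X Y; rewrite -!fE imsetU imsetI; [exact: sig_sub | move=> x y _ _ /f_inj].
- by move=> e; rewrite -fE imset_set1.
Qed.

Lemma minor_kpolymatroid k (E : finType) (A B : {set E}) (rho : {set E} -> int) :
  is_kpolymatroid k rho -> is_kpolymatroid k (@minor E A B rho).
Proof.
case=> -[rho0 rho_mono rho_sub] rho_k; rewrite /minor; split; first split.
- by rewrite imset0 set0U subrr.
- by move=> X Y sXY; rewrite lerB ?rho_mono ?setSU ?imsetS.
- move=> X Y; rewrite imsetU imsetI; last by move=> x y _ _ /val_inj.
  have := rho_sub ([set val x | x in X] :|: B) ([set val x | x in Y] :|: B).
  by rewrite -setUIl setUACA setUid => ?; rewrite addrACA [leRHS]addrACA lerD2r.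
- move=> e; rewrite imset_set1; have := rho_sub [set val e] B.
  by have := rho_mono _ _ (sub0set ([set val e] :&: B)); have := rho_k (val e); lia.
Qed.

Lemma marginal_gt_iso (E F : finType) (rho : {set E} -> int) (sig : {set F} -> int)
    (f : E -> F) g j (Y : {set F}) y :
  cancel f g -> cancel g f -> (forall X : {set E}, sig (f @: X) = rho X) ->
  marginal_gt sig j Y y = marginal_gt rho j (g @: Y) (g y).
Proof.
move=> fK gK fE; have sigE Z : sig Z = rho (g @: Z).
  by rewrite -fE -imset_comp (eq_imset _ gK) imset_id.
by rewrite /marginal_gt !sigE imsetD1 //; apply: can_inj gK.
Qed.

Lemma layer_consistent_iso k (E F : finType) (rho : {set E} -> int) (sig : {set F} -> int) :
  poly_iso rho sig -> layer_consistent k rho -> layer_consistent k sig.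
Proof.
case=> f [[g fK gK] fE] rho_cons Y y z j yY zY yz lt_jk.
have g_inj := can_inj gK.
rewrite /layer_consistent_at !(marginal_gt_iso _ _ _ fK gK fE) !imsetD1 //.
by apply: rho_cons; rewrite ?imset_f ?(inj_eq g_inj).
Qed.

Lemma rhoAE a b c (X : {set bool}) :
  rhoA a b c X =
  if false \in X then (if true \in X then Posz (a + c) else Posz b)
  else (if true \in X then Posz c else 0%R).
Proof.
have neq_set1 (x : bool) : x \in X -> (X == [set ~~ x]) = false.
  by move=> xX; apply/negbTE/eqP => /setP/(_ x); rewrite xX inE; case: x {xX}.
rewrite /rhoA; case fX: (false \in X); case tX: (true \in X).
- by rewrite (neq_set1 true) // (neq_set1 false) //; case: eqP fX => // ->; rewrite inE.
- have -> : X = [set false] by apply/setP => -[]; rewrite inE ?fX ?tX.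
  by rewrite eqxx; case: eqP => // /setP/(_ false); rewrite !inE.
- have -> : X = [set true] by apply/setP => -[]; rewrite inE ?fX ?tX.
  rewrite eqxx; case: eqP => [/setP/(_ true)|_]; rewrite ?inE //.
  by case: eqP => // /setP/(_ true); rewrite !inE.
- have -> : X = set0 by apply/setP => -[]; rewrite inE ?fX ?tX.
  by rewrite eqxx.
Qed.

Lemma rhoA_kpolymatroid k a b c :
  a < b -> b < c -> c <= k -> is_kpolymatroid k (rhoA a b c).
Proof.
move=> lt_ab lt_bc le_ck; split; first split.
- by rewrite rhoAE !inE.
- move=> X Y /subsetP sXY; rewrite !rhoAE.
  have := sXY false; have := sXY true.
  by case: (false \in X); case: (true \in X); case: (false \in Y); case: (true \in Y);
    move=> /= sT sF; rewrite ?lez_nat; try have := sT isT; try have := sF isT; lia.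
- move=> X Y; rewrite !rhoAE !inE.
  by case: (false \in X); case: (true \in X); case: (false \in Y); case: (true \in Y) => /=; lia.
- by move=> e; rewrite rhoAE !inE; case: e => /=; lia.
Qed.

Lemma rhoA_not_layer_consistent k a b c :
  a < b -> b < c -> c <= k -> ~ layer_consistent k (rhoA a b c).
Proof.
move=> lt_ab lt_bc le_ck /(_ [set: bool] false true a) cons.
have /cons : a < k by lia.
by rewrite /layer_consistent_at /marginal_gt !rhoAE !inE /= !ltz_nat; lia.
Qed.

Lemma layer_consistent_card_le1 k (E : finType) (rho : {set E} -> int) :
  #|E| <= 1 -> layer_consistent k rho.
Proof.
move=> le1 X e m j _ _ em; have := subset_leq_card (subsetT [set e; m]).
by rewrite cards2 em cardsT; lia.
Qed.

Lemma minor_imsetD1 (E : finType) (A B : {set E}) (Y : {set {x | x \in ~: (A :|: B)}}) y :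
  [set val x | x in Y :\ y] :|: B = ([set val x | x in Y] :|: B) :\ val y.
Proof.
have yNB : val y \notin B by move: (valP y); rewrite !inE negb_or => /andP[].
by rewrite imsetD1 ?setDUl ?(setD1_id yNB) //; apply: val_inj.
Qed.

Lemma marginal_gt_minor (E : finType) (A B : {set E}) (rho : {set E} -> int) j
    (Y : {set {x | x \in ~: (A :|: B)}}) y :
  marginal_gt (@minor E A B rho) j Y y =
  marginal_gt rho j ([set val x | x in Y] :|: B) (val y).
Proof. by rewrite /marginal_gt /minor minor_imsetD1 opprB addrA subrK. Qed.

Lemma set2U_setD2 (T : finType) (X : {set T}) e m :
  e \in X -> m \in X -> e != m -> [set e; m] :|: (X :\ e :\ m) = X.
Proof.
move=> eX mX em; have mXe : m \in X :\ e by rewrite !inE mX eq_sym em.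
by rewrite -setUA setD1K // setD1K.
Qed.

Lemma layer_consistent_at_minor k (E : finType) (rho : {set E} -> int) (X : {set E}) e m j :
  e \in X -> m \in X -> e != m -> j < k ->
  in_Qk k (@minor E (~: X) (X :\ e :\ m) rho) -> layer_consistent_at rho j X e m.
Proof.
set B := X :\ e :\ m; move=> eX mX em lt_jk /Qk_layer_consistent minor_cons.
have eC : e \in ~: (~: X :|: B) by rewrite !inE eX eqxx /= ?andbF.
have mC : m \in ~: (~: X :|: B) by rewrite !inE mX eqxx /= ?andbF.
pose e' : {x | x \in ~: (~: X :|: B)} := exist _ e eC.
pose m' : {x | x \in ~: (~: X :|: B)} := exist _ m mC.
have e'm' : e' != m' by rewrite -(inj_eq val_inj).
have := minor_cons [set e'; m'] e' m' j; rewrite !inE !eqxx orbT.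
move=> /(_ isT isT e'm' lt_jk); rewrite /layer_consistent_at !marginal_gt_minor.
by rewrite !minor_imsetD1 imsetU1 imset_set1 /= set2U_setD2.
Qed.

Lemma poly_iso_rhoA_pair (E : finType) (rho : {set E} -> int) (e m : E) a b c :
  e != m -> [set e; m] = [set: E] -> rho set0 = 0%R ->
  rho [set e] = Posz b -> rho [set m] = Posz c -> rho [set e; m] = Posz (a + c) ->
  poly_iso rho (rhoA a b c).
Proof.
move=> em full rho0 rho_e rho_m rho_em.
have cover w : (w == e) || (w == m) by rewrite -in_set2 full inE.
have me : (m == e) = false by rewrite eq_sym (negbTE em).
pose f w := w == m.
have f_bij : bijective f.
  exists (fun x : bool => if x then m else e) => [w|[]]; rewrite /f ?eqxx ?(negbTE em) //.
  by case/orP: (cover w) => /eqP ->; rewrite ?eqxx ?(negbTE em).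
exists f; split => // X.
have mem_f w : (f w \in f @: X) = (w \in X) by rewrite mem_imset //; apply: bij_inj.
rewrite rhoAE.
have -> : false \in f @: X = (e \in X) by rewrite -mem_f /f (negbTE em).
have -> : true \in f @: X = (m \in X) by rewrite -mem_f /f eqxx.
case eX: (e \in X); case mX: (m \in X);
  [rewrite -rho_em | rewrite -rho_e | rewrite -rho_m | rewrite -rho0]; congr rho;
  by apply/setP => w; rewrite !inE; case/orP: (cover w) => /eqP ->;
     rewrite ?eX ?mX ?eqxx ?me ?(negbTE em) ?orbT.
Qed.

Lemma two_point_iso_rhoA k (E : finType) (rho : {set E} -> int) (e m : E) :
  e != m -> [set e; m] = [set: E] -> is_kpolymatroid k rho ->
  (rho [set e] < rho [set m])%R -> (rho [set e; m] < rho [set e] + rho [set m])%R ->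
  exists a b c : nat, [/\ a < b, b < c, c <= k & poly_iso rho (rhoA a b c)].
Proof.
move=> em full [[rho0 rho_mono _] rho_k] lt_em lt_sub.
have nat_of_ge0 (x : int) : (0 <= x)%R -> exists n : nat, x = Posz n.
  by move=> x_ge0; exists `|x|%N; rewrite gez0_abs.
have [b rho_e] : exists b : nat, rho [set e] = Posz b.
  by apply: nat_of_ge0; rewrite -rho0 rho_mono ?sub0set.
have [c rho_m] : exists c : nat, rho [set m] = Posz c.
  by apply: nat_of_ge0; rewrite -rho0 rho_mono ?sub0set.
have [a rho_em] : exists a : nat, (rho [set e; m] - rho [set m])%R = Posz a.
  by apply: nat_of_ge0; rewrite subr_ge0 rho_mono // sub1set !inE eqxx orbT.
exists a, b, c; split; rewrite -?(ltz_nat, lez_nat).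
- by rewrite -rho_e -rho_em; lia.
- by rewrite -rho_e -rho_m.
- by rewrite -rho_m rho_k.
- have rho_em' : rho [set e; m] = Posz (a + c) by rewrite PoszD -rho_m -rho_em subrK.
  exact: poly_iso_rhoA_pair em full rho0 rho_e rho_m rho_em'.
Qed.

Lemma layer_consistent_at_pair (E : finType) (rho : {set E} -> int) j (e m : E) :
  rho set0 = 0%R -> e != m ->
  rho [set e] = rho [set m] \/ rho [set e; m] = (rho [set e] + rho [set m])%R ->
  layer_consistent_at rho j [set e; m] e m.
Proof.
move=> rho0 em sym_or_mod; rewrite /layer_consistent_at /marginal_gt.
have -> : [set e; m] :\ e = [set m] by rewrite setU1K // inE.
have -> : [set e; m] :\ m = [set e] by rewrite setUC setU1K // inE eq_sym.
rewrite !setDv rho0 !subr0.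
case: sym_or_mod => [-> // | ->].
by rewrite addrK [(rho [set e] + _)%R]addrC addrK addnC.
Qed.

Lemma excluded_minor_Qk_rhoA k (E : finType) (rho : {set E} -> int) a b c :
  a < b -> b < c -> c <= k -> poly_iso rho (rhoA a b c) -> excluded_minor_Qk k rho.
Proof.
move=> lt_ab lt_bc le_ck rho_iso.
have rho_kpoly := poly_iso_kpolymatroid rho_iso (rhoA_kpolymatroid lt_ab lt_bc le_ck).
split=> // [/Qk_layer_consistent/(layer_consistent_iso rho_iso)|A B _ AB_neq0].
  exact: rhoA_not_layer_consistent.
apply: Qk_of_layer_consistent; first exact: minor_kpolymatroid.
have cardE : #|[set: E]| = 2.
  by have [f [/bij_eq_card cardE _]] := rho_iso; rewrite cardsT cardE card_bool.
have le1 : #|~: (A :|: B)| <= 1.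
  have := cardsUI (A :|: B) (~: (A :|: B)); rewrite setUCr setICr cardE cards0.
  by rewrite -card_gt0 in AB_neq0; lia.
apply: layer_consistent_card_le1; rewrite card_sig.
by apply: leq_trans le1; apply/eq_leq/eq_card => x; rewrite inE.
Qed.

Lemma two_point_excluded_iso k (E : finType) (rho : {set E} -> int) (e m : E) j :
  e != m -> [set e; m] = [set: E] -> is_kpolymatroid k rho ->
  ~ layer_consistent_at rho j [set e; m] e m ->
  exists a b c : nat, [/\ a < b, b < c, c <= k & poly_iso rho (rhoA a b c)].
Proof.
move=> em full rho_kpoly incons; have [rho0 _ rho_sub] := rho_kpoly.1.
have [ne nmod] : rho [set e] != rho [set m] /\
                 rho [set e; m] != (rho [set e] + rho [set m])%R.
  by split; apply/eqP => eq; apply: incons; apply: layer_consistent_at_pair; auto.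
have lt_sub : (rho [set e; m] < rho [set e] + rho [set m])%R.
  rewrite lt_neqAle nmod /=; have := rho_sub [set e] [set m].
  suff -> : [set e] :&: [set m] = set0 by rewrite rho0 addr0.
  by apply/setP => w; rewrite !inE; case: eqVneq => // ->; rewrite (negbTE em).
move: ne; rewrite neq_lt => /orP[lt_em|lt_me].
  exact: two_point_iso_rhoA em full rho_kpoly lt_em lt_sub.
rewrite setUC addrC in full lt_sub.
by apply: two_point_iso_rhoA _ full rho_kpoly lt_me lt_sub; rewrite eq_sym.
Qed.

Lemma setCU_setD2 (T : finType) (X : {set T}) e m :
  e \in X -> m \in X -> ~: X :|: (X :\ e :\ m) = ~: [set e; m].
Proof.
move=> eX mX; apply/setP => w; rewrite !inE.
case: (eqVneq w e) => [->|_]; first by rewrite eX /= andbF.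
case: (eqVneq w m) => [->|_]; first by rewrite mX orbT.
by rewrite orNb.
Qed.

Lemma excluded_minor_Qk_iso k (E : finType) (rho : {set E} -> int) :
  excluded_minor_Qk k rho ->
  exists a b c : nat, [/\ a < b, b < c, c <= k & poly_iso rho (rhoA a b c)].
Proof.
case=> rho_kpoly rho_notQ rho_minors; apply: NNPP => no_iso; apply: rho_notQ.
apply: (Qk_of_layer_consistent rho_kpoly) => X e m j eX mX em lt_jk.
have [full|not_full] := eqVneq [set e; m] setT.
  have -> : X = [set e; m].
    by apply/eqP; rewrite eqEsubset {1}full subsetT subUset !sub1set eX mX.
  apply: NNPP => incons; apply: no_iso; exact: two_point_excluded_iso full rho_kpoly incons.
apply: (layer_consistent_at_minor eX mX em lt_jk); apply: rho_minors.
  by rewrite disjoints_subset setCS (subset_trans (subD1set _ m) (subD1set X e)).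
rewrite setCU_setD2 //; apply: contra_neq not_full => /setP C0; apply/setP => w.
by move: (C0 w); rewrite !inE; case: (_ || _).
Qed.

Lemma rhoA_iso_inj a b c a' b' c' :
  a < b -> b < c -> a' < b' -> b' < c' ->
  poly_iso (rhoA a b c) (rhoA a' b' c') -> [/\ a = a', b = b' & c = c'].
Proof.
move=> lt_ab lt_bc lt_ab' lt_bc' [f [/bij_inj f_inj fE]].
have := fE [set false]; have := fE [set true]; have := fE [set false; true].
rewrite imsetU1 !imset_set1 !rhoAE !inE /=.
have : f false != f true by rewrite (inj_eq f_inj).
by case: (f false); case: (f true) => //= _ ? ? ?; split; lia.
Qed.

Theorem theorem5p2 (k : nat) : (2 <= k)%N ->
  (forall (E : finType) (rho : {set E} -> int),
     excluded_minor_Qk k rho <->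
     exists a b c : nat,
       [/\ (a < b)%N, (b < c)%N, (c <= k)%N & poly_iso rho (rhoA a b c)]) /\
  (forall a b c a' b' c' : nat,
     (a < b)%N -> (b < c)%N -> (c <= k)%N ->
     (a' < b')%N -> (b' < c')%N -> (c' <= k)%N ->
     poly_iso (rhoA a b c) (rhoA a' b' c') -> [/\ a = a', b = b' & c = c']).
Proof.
move=> _; split=> [E rho|a b c a' b' c' lt_ab lt_bc _ lt_ab' lt_bc' _].
  split; first exact: excluded_minor_Qk_iso.
  by case=> a [b [c [lt_ab lt_bc le_ck rho_iso]]]; apply: excluded_minor_Qk_rhoA rho_iso.
exact: rhoA_iso_inj.
Qed.
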